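(* Let $\theta\in(0,\pi/2)$ and $|\psi_1\rangle=\cos\theta|00\rangle+\sin\theta|11\rangle$. Then there exist unit vectors $\hat a_1,\hat a_2,\hat a_3\in\mathbb R^3$ and an orthonormal triple $\hat b_1,\hat b_2,\hat b_3\in\mathbb R^3$ such that $\frac13\sum_{k=1}^3\langle\psi_1|(\hat a_k\cdot\vec\sigma)\otimes(\hat b_k\cdot\vec\sigma)|\psi_1\rangle=\frac{2+\sqrt{1+2\sin^2 2\theta}}{3\sqrt3}>\frac1{\sqrt3}.$
   Context: $\vec\sigma=(\sigma_x,\sigma_y,\sigma_z)$ is the vector of Pauli matrices; the first tensor factor is Alice's qubit, the second Bob's; $\{|0\rangle,|1\rangle\}$ is the computational basis. The number $1/\sqrt3$ is the local-hidden-state bound of the 3-setting linear steering inequality $\frac13\sum_{k=1}^3\langle A_k(\hat b_k\cdot\vec\sigma^B)\rangle\le\frac1{\sqrt3}$ with mutually orthogonal $\hat b_k$. *)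

From HB Require Import structures.
From mathcomp Require Import all_boot all_order all_algebra.
From mathcomp Require Import all_classical all_reals all_analysis.
From mathcomp Require Import complex mxtens.
Set Implicit Arguments. Unset Strict Implicit. Unset Printing Implicit Defensive.
Import Order.TTheory GRing.Theory Num.Theory.
Local Open Scope ring_scope.
Local Open Scope complex_scope.

Section Qubits.
Variable R : realType.
Local Notation C := R[i].

Definition ket0 : 'cV[C]_2 := \col_(i < 2) (if val i == 0%N then 1 else 0).
Definition ket1 : 'cV[C]_2 := \col_(i < 2) (if val i == 1%N then 1 else 0).

Definition sigma_x : 'M[C]_2 := \matrix_(i < 2, j < 2) (if val i == val j then 0 else 1).
Definition sigma_y : 'M[C]_2 :=
  \matrix_(i < 2, j < 2)
    (if val i == val j then 0 else if val i == 0%N then - 'i else 'i).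
Definition sigma_z : 'M[C]_2 :=
  \matrix_(i < 2, j < 2) (if val i == val j then (if val i == 0%N then 1 else -1) else 0).

Definition dot_sigma (a : 'rV[R]_3) : 'M[C]_2 :=
  (a 0 0)%:C *: sigma_x + (a 0 1)%:C *: sigma_y + (a 0 2)%:C *: sigma_z.

Definition dot3 (u v : 'rV[R]_3) : R := \sum_(i < 3) u 0 i * v 0 i.

Definition adj {m n} (A : 'M[C]_(m, n)) : 'M[C]_(n, m) := (map_mx conjc A)^T.

Definition expect {n} (psi : 'cV[C]_n) (M : 'M[C]_n) : C := (adj psi *m M *m psi) 0 0.

(* |psi_1> = cos t |00> + sin t |11>, first tensor factor = Alice *)
Definition psi1 (t : R) : 'cV[C]_(2 * 2) :=
  (cos t)%:C *: (ket0 *t ket0) + (sin t)%:C *: (ket1 *t ket1).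
End Qubits.

(* The state psi1 has correlation matrix T = diag(s, -s, 1) with s = sin 2θ:
   <psi1|(a.σ)⊗(b.σ)|psi1> = a T b^T.  Bob measures along the orthonormal basis
   whose vectors all have z-component 1/√3.  For the first two settings Alice
   measures along z, for the third along T b_3 / |T b_3|, so the total
   correlation is 1/√3 + 1/√3 + |T b_3| = (2 + √(1 + 2 s^2)) / √3, which
   exceeds the local bound 3/√3 exactly when s ≠ 0. *)
From HB Require Import structures.
From mathcomp Require Import all_boot all_order all_algebra.
From mathcomp Require Import all_classical all_reals all_analysis.
From mathcomp Require Import complex mxtens.
From mathcomp Require Import ring lra.
Import Order.TTheory GRing.Theory Num.Theory.
Local Open Scope ring_scope.
Local Open Scope complex_scope.

Section Psi1Steering.
Variable R : realType.
Local Notation C := R[i].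

Lemma adjD m n (u v : 'M[C]_(m, n)) : adj (u + v) = adj u + adj v.
Proof. by apply/matrixP => i j; rewrite !mxE rmorphD. Qed.

Lemma adjZ_real m n (c : R) (u : 'M[C]_(m, n)) : adj (c%:C *: u) = c%:C *: adj u.
Proof. by apply/matrixP => i j; rewrite !mxE rmorphM; congr (_ * _); exact: conjc_real. Qed.

Lemma adj_tens m n p q (u : 'M[C]_(m, n)) (v : 'M[C]_(p, q)) :
  adj (u *t v) = adj u *t adj v.
Proof. by rewrite /adj map_mxT trmx_tens. Qed.

Lemma adj_delta m n (i : 'I_m) (j : 'I_n) : adj (delta_mx i j : 'M[C]_(m, n)) = delta_mx j i.
Proof. by apply/matrixP => k l; rewrite !mxE rmorph_nat andbC. Qed.

Lemma ket0_delta : ket0 R = delta_mx 0 0.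
Proof. by apply/matrixP => i j; rewrite !mxE [j]ord1 eqxx andbT; case: i => [[|[|]]]. Qed.

Lemma ket1_delta : ket1 R = delta_mx 1 0.
Proof. by apply/matrixP => i j; rewrite !mxE [j]ord1 eqxx andbT; case: i => [[|[|]]]. Qed.

Lemma form_tens m p (u1 v1 : 'cV[C]_m) (u2 v2 : 'cV[C]_p) (A : 'M[C]_m) (B : 'M[C]_p) :
  (adj (u1 *t u2) *m (A *t B) *m (v1 *t v2)) 0 0 =
  (adj u1 *m A *m v1) 0 0 * (adj u2 *m B *m v2) 0 0.
Proof.
rewrite adj_tens !tensmx_mul mxE.
by case: mxtens_unindex => x y /=; rewrite [x]ord1 [y]ord1.
Qed.

Lemma form_delta n (A : 'M[C]_n) i j :
  (adj (delta_mx i 0 : 'cV[C]_n) *m A *m (delta_mx j 0 : 'cV[C]_n)) 0 0 = A i j.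
Proof. by rewrite adj_delta -rowE -colE !mxE. Qed.

Lemma form_real_combination n (c s : R) (X Y : 'cV[C]_n) (M : 'M[C]_n) :
  (adj (c%:C *: X + s%:C *: Y) *m M *m (c%:C *: X + s%:C *: Y)) 0 0 =
  c%:C * c%:C * (adj X *m M *m X) 0 0 + c%:C * s%:C * (adj X *m M *m Y) 0 0
  + s%:C * c%:C * (adj Y *m M *m X) 0 0 + s%:C * s%:C * (adj Y *m M *m Y) 0 0.
Proof.
rewrite adjD !adjZ_real !mulmxDl !mulmxDr -!scalemxAl -!scalemxAr !mxE.
ring.
Qed.

Lemma expect_psi1_tens (t : R) (A B : 'M[C]_2) :
  expect (psi1 t) (A *t B) =
  (cos t)%:C * (cos t)%:C * (A 0 0 * B 0 0) + (cos t)%:C * (sin t)%:C * (A 0 1 * B 0 1)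
  + (sin t)%:C * (cos t)%:C * (A 1 0 * B 1 0) + (sin t)%:C * (sin t)%:C * (A 1 1 * B 1 1).
Proof.
by rewrite /expect /psi1 form_real_combination !form_tens ket0_delta ket1_delta !form_delta.
Qed.

Lemma dot_sigma00 (a : 'rV[R]_3) : dot_sigma a 0 0 = (a 0 2)%:C.
Proof. by rewrite /dot_sigma !mxE /=; ring. Qed.

Lemma dot_sigma01 (a : 'rV[R]_3) : dot_sigma a 0 1 = (a 0 0)%:C - 'i * (a 0 1)%:C.
Proof. by rewrite /dot_sigma !mxE /= -complexiE; ring. Qed.

Lemma dot_sigma10 (a : 'rV[R]_3) : dot_sigma a 1 0 = (a 0 0)%:C + 'i * (a 0 1)%:C.
Proof. by rewrite /dot_sigma !mxE /= -complexiE; ring. Qed.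

Lemma dot_sigma11 (a : 'rV[R]_3) : dot_sigma a 1 1 = - (a 0 2)%:C.
Proof. by rewrite /dot_sigma !mxE /=; ring. Qed.

Definition psi1_corr (s : R) (a b : 'rV[R]_3) : R :=
  a 0 2 * b 0 2 + s * (a 0 0 * b 0 0 - a 0 1 * b 0 1).

Lemma expect_psi1_dot_sigma (t : R) (a b : 'rV[R]_3) :
  expect (psi1 t) (dot_sigma a *t dot_sigma b) = (psi1_corr (sin (2 * t)) a b)%:C.
Proof.
have corrE : psi1_corr (sin (2 * t)) a b =
    a 0 2 * b 0 2 * (cos t ^+ 2 + sin t ^+ 2)
    + 2 * cos t * sin t * (a 0 0 * b 0 0 - a 0 1 * b 0 1).
  have -> : 2 * t = t + t by ring.
  by rewrite cos2Dsin2 sinD /psi1_corr; ring.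
rewrite expect_psi1_tens !(dot_sigma00, dot_sigma01, dot_sigma10, dot_sigma11).
rewrite corrE !(rmorphD, rmorphB, rmorphM, rmorphXn, rmorph_nat).
transitivity ((a 0 2)%:C * (b 0 2)%:C * ((cos t)%:C ^+ 2 + (sin t)%:C ^+ 2) +
  2 * (cos t)%:C * (sin t)%:C *
    ((a 0 0)%:C * (b 0 0)%:C + 'i ^+ 2 * ((a 0 1)%:C * (b 0 1)%:C))); first ring.
by rewrite sqr_i; ring.
Qed.

Definition vec3 (x y z : R) : 'rV[R]_3 :=
  \row_(j < 3) (if val j == 0%N then x else if val j == 1%N then y else z).

Lemma dot3_vec3 x y z x' y' z' :
  dot3 (vec3 x y z) (vec3 x' y' z') = x * x' + y * y' + z * z'.
Proof. by rewrite /dot3 !big_ord_recr big_ord0 /= !mxE /=; ring. Qed.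

Lemma psi1_corr_vec3 s x y z x' y' z' :
  psi1_corr s (vec3 x y z) (vec3 x' y' z') = z * z' + s * (x * x' - y * y').
Proof. by rewrite /psi1_corr !mxE. Qed.

Let p : R := (Num.sqrt 2)^-1.
Let q : R := (Num.sqrt 3)^-1.

Let p_sqr : p * p = 2^-1.
Proof. by rewrite -invfM -expr2 sqr_sqrtr. Qed.

Let q_sqr : q * q = 3^-1.
Proof. by rewrite -invfM -expr2 sqr_sqrtr. Qed.

Definition bob_basis (k : 'I_3) : 'rV[R]_3 :=
  if val k == 0%N then vec3 p (p * q) q
  else if val k == 1%N then vec3 (- p) (p * q) q
  else vec3 0 (- (2 * p * q)) q.

Lemma bob_basis_orthonormal k l : dot3 (bob_basis k) (bob_basis l) = (k == l)%:R.
Proof.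
have pqpq : p * q * (p * q) = 6^-1.
  by rewrite mulrACA p_sqr q_sqr -invfM; congr _^-1; ring.
move: p_sqr q_sqr pqpq; clearbody p q => p2 q2 pq2.
by case: k l => [[|[|[|?]]] ?] [[|[|[|?]]] ?] //=; rewrite dot3_vec3; nra.
Qed.

Definition alice_dirs (s : R) (k : 'I_3) : 'rV[R]_3 :=
  let r := Num.sqrt (1 + 2 * s ^+ 2) in
  if val k == 2%N then vec3 0 (2 * p * s / r) r^-1 else vec3 0 0 1.

Let sqr_sqrt_1D2sqr (s : R) : Num.sqrt (1 + 2 * s ^+ 2) ^+ 2 = 1 + 2 * s ^+ 2.
Proof. by rewrite sqr_sqrtr // addr_ge0 // mulr_ge0 // sqr_ge0. Qed.

Let sqrt_1D2sqr_neq0 (s : R) : Num.sqrt (1 + 2 * s ^+ 2) != 0.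
Proof. by rewrite sqrtr_eq0 -ltNge ltr_pwDl // mulr_ge0 // sqr_ge0. Qed.

Lemma alice_dirs_unit s k : dot3 (alice_dirs s k) (alice_dirs s k) = 1.
Proof.
rewrite /alice_dirs; case: ifP => _; rewrite dot3_vec3; last by ring.
have := sqr_sqrt_1D2sqr s; have := sqrt_1D2sqr_neq0 s.
move: (Num.sqrt _) => r r_neq0 r2.
transitivity ((4 * (p * p) * s ^+ 2 + 1) / r ^+ 2); first by field.
by rewrite p_sqr r2; field; rewrite -r2 expf_neq0.
Qed.

Lemma sum_psi1_corr s :
  \sum_(k < 3) psi1_corr s (alice_dirs s k) (bob_basis k) =
  (2 + Num.sqrt (1 + 2 * s ^+ 2)) / Num.sqrt 3.
Proof.
rewrite !big_ord_recr big_ord0 /= !psi1_corr_vec3.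
have := sqr_sqrt_1D2sqr s; have := sqrt_1D2sqr_neq0 s.
move: (Num.sqrt _) => r r_neq0 r2.
transitivity (2 * q + q * (1 + 2 * (2 * (p * p)) * s ^+ 2) / r); first by field.
rewrite p_sqr mulfV ?pnatr_eq0 // mulr1 -r2 /q.
by field; rewrite r_neq0 gt_eqF // sqrtr_gt0.
Qed.

Lemma steering_violation (s : R) : s != 0 ->
  (2 + Num.sqrt (1 + 2 * s ^+ 2)) / (3 * Num.sqrt 3) > (Num.sqrt 3)^-1.
Proof.
move=> s_neq0.
have sqrt3_gt0 : 0 < Num.sqrt 3 :> R by rewrite sqrtr_gt0.
have r_gt1 : 1 < Num.sqrt (1 + 2 * s ^+ 2).
  have s2_gt0 : 0 < 2 * s ^+ 2 by rewrite pmulr_rgt0 // exprn_even_gt0 // s_neq0 orbT.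
  by rewrite -[X in X < _]sqrtr1 ltr_sqrt ?ltrDl //; lra.
have -> : (2 + Num.sqrt (1 + 2 * s ^+ 2)) / (3 * Num.sqrt 3) =
  (Num.sqrt 3)^-1 + (Num.sqrt (1 + 2 * s ^+ 2) - 1) / (3 * Num.sqrt 3).
  by field; rewrite gt_eqF.
by rewrite ltrDl divr_gt0 ?subr_gt0 // mulr_gt0.
Qed.

End Psi1Steering.

Theorem mainTheorem8 (R : realType) (theta : R) :
  0 < theta -> theta < pi / 2 ->
  exists (a b : 'I_3 -> 'rV[R]_3),
    (forall k, dot3 (a k) (a k) = 1) /\
    (forall k l, dot3 (b k) (b l) = (k == l)%:R) /\
    (3%:R^-1 * \sum_(k < 3)
        expect (psi1 theta) (dot_sigma (a k) *t dot_sigma (b k))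
      = ((2 + Num.sqrt (1 + 2 * sin (2 * theta) ^+ 2))
           / (3 * Num.sqrt 3))%:C) /\
    (2 + Num.sqrt (1 + 2 * sin (2 * theta) ^+ 2)) / (3 * Num.sqrt 3)
      > (Num.sqrt 3)^-1.
Proof.
move=> theta_gt0 theta_lt.
have sin2_gt0 : 0 < sin (2 * theta) by apply: sin_gt0_pi; apply/andP; split; lra.
exists (alice_dirs R (sin (2 * theta))), (bob_basis R).
split; first exact: alice_dirs_unit.
split; first exact: bob_basis_orthonormal.
split; last exact/steering_violation/lt0r_neq0.
under eq_bigr do rewrite expect_psi1_dot_sigma.
rewrite -rmorph_sum sum_psi1_corr -(rmorph_nat (real_complex R) 3) -fmorphV -rmorphM.
by congr _%:C; rewrite invfM mulrCA mulrA.
Qed.
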